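(* Let $n\ge 3$ and $s,t\in S_n$ with $[s,t]=sts^{-1}t^{-1}=(z\;y\;x)$, where $x,y,z$ lie in the same cycle of $s$ in this cyclic order, i.e. $d_s(x,y)+d_s(y,z)+d_s(z,x)=d_s(x,x)$, and assume $\langle s,t\rangle$ is transitive on $\{1,\dots,n\}$. Then the group $\langle s,t\rangle$ is primitive if and only if $s$ is an $n$-cycle and $\gcd\big(d_s(x,y),\,d_s(y,z),\,d_s(z,x)\big)=1$.
   Context: Permutations compose as functions. For $s\in S_n$, $d_s(u,v)=\min\{d\ge1: s^d(u)=v\}$ if $u,v$ lie in the same cycle of $s$, and $\infty$ otherwise. A permutation group $G\le S_n$ is primitive if the only subsets $\Delta\neq\emptyset$ of $\{1,\dots,n\}$ with $g(\Delta)=\Delta$ or $g(\Delta)\cap\Delta=\emptyset$ for every $g\in G$ are the singletons and the whole set. *)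

From mathcomp Require Import all_boot all_fingroup.
Set Implicit Arguments. Unset Strict Implicit. Unset Printing Implicit Defensive.
Local Open Scope group_scope.

(* Convention: MathComp multiplies permutations left-to-right:
   (s * t) u = t (s u).  Hence the functional composition
   s o t o s^-1 o t^-1 of the paper is the perm t^-1 * s^-1 * t * s. *)
Definition commf (T : finType) (s t : {perm T}) : {perm T} :=
  t^-1 * s^-1 * t * s.

Definition is_3cycle (T : finType) (c : {perm T}) (z y x : T) : Prop :=
  [/\ z != y, y != x & z != x] /\
  [/\ c z = y, c y = x, c x = z &
      forall u, u != x -> u != y -> u != z -> c u = u].

Definition is_ds (T : finType) (s : {perm T}) (u v : T) (d : nat) : Prop :=
  [/\ (0 < d)%N, (s ^+ d) u = v &
      forall d', (0 < d')%N -> (d' < d)%N -> (s ^+ d') u != v].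

Definition full_cycle (T : finType) (s : {perm T}) : Prop :=
  exists u, porbit s u = [set: T].

Definition transitive_on (T : finType) (G : {set {perm T}}) : Prop :=
  forall u v : T, exists2 g, g \in G & g u = v.

Definition primitive_grp (T : finType) (G : {set {perm T}}) : Prop :=
  forall D : {set T}, D != set0 ->
    (forall g, g \in G -> (g @: D = D \/ [disjoint g @: D & D])) ->
    #|D| = 1%N \/ D = [set: T].

From mathcomp Require Import all_boot all_fingroup.
Local Open Scope group_scope.
Set Implicit Arguments. Unset Strict Implicit.

(* The key observation is that t commutes with s up to [s, t], which moves
   points only inside {x, y, z}.  Hence, whenever x, y, z lie in one orbit of
   a power s ^+ d, the orbits of s ^+ d form a system of blocks of <s, t>.
   - Primitive => conditions: with d = 1 the s-cycle through x is a block
     with two points x, y, so s is a full cycle; with d = gcd(a, b, c) the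
     orbit of x under s ^+ d is all of the cycle, which forces d = 1.
   - Conditions => primitive: translate a nontrivial block so that it contains
     x.  Being stabilised by [s, t], it contains y and z, so it is stabilised
     by s ^+ a, s ^+ b, s ^+ c and thus by s ^+ gcd(a, b, c) = s; as s is a
     full cycle the block is everything. *)

Section Blocks.

Variable T : finType.

Definition is_block (G : {set {perm T}}) (D : {set T}) : Prop :=
  forall g, g \in G -> g @: D = D \/ [disjoint g @: D & D].

Lemma fibre_block (A : {set {perm T}}) (U : eqType) (f : T -> U) (u : T) :
  (forall g, g \in A -> forall v w, f v = f w -> f (g v) = f (g w)) ->
  is_block <<A>> [set v | f v == f u].
Proof.
move=> fA.
pose H := [set g : {perm T} |
  [forall v, forall w, (f v == f w) ==> (f (g v) == f (g w))]].
have compatP (g : {perm T}) :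
    reflect (forall v w, f v = f w -> f (g v) = f (g w)) (g \in H).
  rewrite inE; apply: (iffP forallP) => [gH v w /eqP fvw | gH v].
    by apply/eqP; move/forallP/(_ w)/implyP: (gH v); apply.
  by apply/forallP=> w; apply/implyP=> /eqP /gH ->.
have groupH : group_set H.
  apply/group_setP; split; first by apply/compatP=> v w; rewrite !perm1.
  by move=> g h /compatP gH /compatP hH; apply/compatP=> v w /gH /hH; rewrite !permM.
have genH : <<A>> \subset Group groupH.
  by rewrite gen_subG; apply/subsetP=> g /fA /compatP.
move=> g /(subsetP genH) /compatP gH.
have [|meet] := boolP [disjoint _ & _]; [by right | left].
move: meet; rewrite -setI_eq0 => /set0Pn [_ /setIP [/imsetP [v + ->]]].
rewrite !inE => /eqP fv /eqP fgv.
apply/eqP; rewrite eqEcard card_imset ?leqnn ?andbT; last exact: perm_inj.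
apply/subsetP=> _ /imsetP [w + ->]; rewrite !inE => /eqP fw.
by rewrite (gH w v) ?fgv // fw fv.
Qed.

Lemma block_stab (G : {set {perm T}}) (D : {set T}) g u :
  is_block G D -> g \in G -> u \in D -> g u \in D -> g \in 'N(D | 'P).
Proof.
move=> bD gG uD guD; have gD : g @: D = D.
  case: (bD g gG) => // /pred0P /(_ (g u)).
  by rewrite /= guD imset_f.
by apply/astabsP => v; rewrite /= apermE -{1}gD mem_imset //; apply: perm_inj.
Qed.

Lemma block_translate (G : {group {perm T}}) (D : {set T}) g :
  is_block G D -> g \in G -> is_block G (g @: D).
Proof.
move=> bD gG h hG; pose k := g * h * g^-1.
have kG : k \in G by rewrite !groupM ?groupV.
have -> : h @: (g @: D) = g @: (k @: D).
  by rewrite -!imset_comp; apply: eq_imset => v /=; rewrite !permM permKV.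
case: (bD k kG) => [-> | disj]; [by left | right].
rewrite -setI_eq0 -imsetI; last by move=> ? ? _ _; apply: perm_inj.
by move: disj; rewrite -setI_eq0 => /eqP ->; rewrite imset0.
Qed.

Lemma primitive_two_points (G : {set {perm T}}) (D : {set T}) x y :
  primitive_grp G -> is_block G D -> x \in D -> y \in D -> x != y ->
  D = [set: T].
Proof.
move=> prim bD xD yD xy.
have D0 : D != set0 by apply/set0Pn; exists x.
case: (prim D D0 bD) => // /eqP /cards1P [w Dw].
by move: xD yD xy; rewrite Dw !inE => /eqP -> /eqP ->; rewrite eqxx.
Qed.

Lemma full_cycle_stab (D : {set T}) (s : {perm T}) x :
  full_cycle s -> s \in 'N(D | 'P) -> x \in D -> D = [set: T].
Proof.
move=> [u su] sN xD; apply/setP => v; rewrite inE.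
have sx : porbit s x = [set: T] by rewrite -su; apply/eqP; rewrite eq_porbit_mem su.
have : v \in porbit s x by rewrite sx.
by case/porbitP => k ->; rewrite -apermE (astabs_act _ (groupX k sN)).
Qed.

End Blocks.

Lemma mem_expg_gcdn (gT : finGroupType) (K : {group gT}) (p : gT) i j :
  p ^+ i \in K -> p ^+ j \in K -> p ^+ gcdn i j \in K.
Proof.
move=> Kpi Kpj; case: (posnP i) => [-> | i_gt0]; first by rewrite gcd0n.
have [k _ /dvdnP [q bezout]] := Bezoutl j i_gt0.
have Kpkj : p ^+ (k * j) \in K by rewrite mulnC expgM groupX.
by rewrite -(groupMr _ Kpkj) -expgD bezout mulnC expgM groupX.
Qed.

Section Period.

Variables (T : finType) (s : {perm T}) (x : T) (e : nat).
Hypothesis period : is_ds s x x e.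

Lemma ds_period_dvd i : (s ^+ i) x = x -> e %| i.
Proof.
case: period => e_gt0 sex emin sxi.
have sex_mul q : (s ^+ (q * e)) x = x.
  by elim: q => [|q IH]; rewrite ?perm1 // mulSn expgD permM sex IH.
have sxr : (s ^+ (i %% e)) x = x.
  by move: sxi; rewrite {1}(divn_eq i e) expgD permM sex_mul.
apply/eqP; case: (posnP (i %% e)) => // r_gt0.
by move: (emin _ r_gt0 (ltn_pmod i e_gt0)); rewrite sxr eqxx.
Qed.

Lemma ds_period_eq i j : (s ^+ i) x = (s ^+ j) x -> i = j %[mod e].
Proof.
wlog le_ij : i j / i <= j => [hwlog | sx_ij].
  by case: (leqP i j) => [/hwlog //| /ltnW /hwlog h /esym /h].
apply/eqP; rewrite eq_sym eqn_mod_dvd //; apply: ds_period_dvd.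
apply: (@perm_inj _ (s ^+ i)); by rewrite -permM -expgD subnK // sx_ij.
Qed.

(* If s x lies in the orbit of x under s ^+ d, where d divides the period,
   then d = 1: the powers of s ^+ d only reach the multiples of d. *)
Lemma power_orbit_step d : d %| e -> s x \in porbit (s ^+ d) x -> d = 1%N.
Proof.
move=> d_e /porbitP [k]; rewrite -expgM -{1}(expg1 s) => /ds_period_eq.
move/(congr1 (modn^~ d)); rewrite !(modn_dvdm _ d_e) modnMr => /eqP.
by rewrite -/(dvdn d 1) dvdn1 => /eqP.
Qed.

End Period.

Lemma power_orbit_mem (T : finType) (s : {perm T}) x d k :
  d %| k -> (s ^+ k) x \in porbit (s ^+ d) x.
Proof. by move/divnK <-; rewrite mulnC expgM mem_porbit. Qed.

Lemma commf_step (T : finType) (s t : {perm T}) v :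
  commf s t (t (s v)) = s (t v).
Proof. by rewrite /commf !permM !permK. Qed.

Section ThreeCycleCommutator.

Variables (T : finType) (s t : {perm T}) (x y z : T).
Hypothesis c3 : is_3cycle (commf s t) z y x.

Let comm := commf s t.

Lemma commf_invariant (U : Type) (f : T -> U) :
  f x = f y -> f y = f z -> forall q, f (comm q) = f q.
Proof.
case: c3 => _ [cz cy cx cfix] fxy fyz q.
have [-> | qx] := eqVneq q x; first by rewrite cx fxy fyz.
have [-> | qy] := eqVneq q y; first by rewrite cy fxy.
have [-> | qz] := eqVneq q z; first by rewrite cz fyz.
by rewrite cfix.
Qed.

(* If y and z lie in the orbit of x under s ^+ d, then the orbits of s ^+ d
   are blocks of <s, t>: s commutes with s ^+ d, and t commutes with s up to
   the commutator comm, which moves no point out of its s ^+ d-orbit. *)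
Lemma power_orbit_block d :
  y \in porbit (s ^+ d) x -> z \in porbit (s ^+ d) x ->
  is_block <<[set s; t]>> (porbit (s ^+ d) x).
Proof.
set p := s ^+ d; set f := porbit p => y_fx z_fx.
have same_orbit u v : f u = f v -> exists k, v = (p ^+ k) u.
  by move=> fuv; apply/porbitP; rewrite -/(f u) fuv porbit_id.
have f_s u v : f u = f v -> f (s u) = f (s v).
  move=> /same_orbit [k ->]; have skp : commute s (p ^+ k).
    by apply: commuteX; apply: commuteX.
  by rewrite -permM -skp permM /f porbit_perm.
have fy : f y = f x by apply/eqP; rewrite eq_porbit_mem.
have fz : f z = f x by apply/eqP; rewrite eq_porbit_mem.
have fc := commf_invariant (esym fy) (etrans fy (esym fz)).
have f_ts i w : f (t ((s ^+ i) w)) = f ((s ^+ i) (t w)).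
  elim: i w => [|i IH] w; first by rewrite !perm1.
  by rewrite expgSr !permM -fc commf_step (f_s _ _ (IH w)).
have f_t u v : f u = f v -> f (t u) = f (t v).
  move=> /same_orbit [k ->].
  by rewrite -expgM f_ts expgM /f porbit_perm.
have -> : f x = [set v | f v == f x].
  by apply/setP => v; rewrite inE eq_porbit_mem.
apply: fibre_block => g; rewrite !inE => /orP [] /eqP ->; [exact: f_s | exact: f_t].
Qed.

(* A block of a group containing comm which contains x and another point is
   stabilised by comm, hence also contains comm x = z and comm z = y. *)
Lemma block_3cycle (G : {set {perm T}}) (D : {set T}) :
  comm \in G -> is_block G D -> x \in D -> #|D| != 1%N -> y \in D /\ z \in D.
Proof.
case: c3 => _ [cz cy cx cfix] cG bD xD D1.
have [w wD wx] : exists2 w, w \in D & w != x.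
  have /set0Pn [w /setD1P [wx wD]] : D :\ x != set0.
    by rewrite -card_gt0 lt0n; apply: contra D1; rewrite (cardsD1 x D) xD => /eqP ->.
  by exists w.
have [q qD cqD] : exists2 q, q \in D & comm q \in D.
  have [wy | wy] := eqVneq w y; first by exists y; [rewrite -wy | rewrite cy].
  have [wz | wz] := eqVneq w z; first by exists x; rewrite // cx -wz.
  by exists w; rewrite // cfix.
have cN := block_stab bD cG qD cqD.
have zD : z \in D by rewrite -cx -apermE (astabs_act _ cN).
by split=> //; rewrite -cz -apermE (astabs_act _ cN).
Qed.

Lemma primitive_power_orbit d :
  primitive_grp <<[set s; t]>> ->
  y \in porbit (s ^+ d) x -> z \in porbit (s ^+ d) x ->
  porbit (s ^+ d) x = [set: T].
Proof.
move=> prim y_x z_x; have xy : x != y by case: c3 => [[_ + _] _]; rewrite eq_sym.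
exact: primitive_two_points prim (power_orbit_block y_x z_x) (porbit_id _ x) y_x xy.
Qed.

(* A nontrivial block through x of a group containing s and t contains y and z,
   so it is stabilised by s ^+ a, s ^+ b, s ^+ c, hence by s ^+ gcd(a, b, c). *)
Lemma block_stab_gcd (G : {group {perm T}}) (D : {set T}) a b c :
  s \in G -> t \in G -> is_block G D -> x \in D -> #|D| != 1%N ->
  (s ^+ a) x = y -> (s ^+ b) y = z -> (s ^+ c) z = x ->
  s ^+ gcdn (gcdn a b) c \in 'N(D | 'P).
Proof.
move=> sG tG bD xD D1 sxa syb szc.
have cG : comm \in G by rewrite /comm /commf !groupM ?groupV.
have [yD zD] := block_3cycle cG bD xD D1.
have stab k u : u \in D -> (s ^+ k) u \in D -> s ^+ k \in 'N(D | 'P).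
  exact: block_stab bD (groupX k sG).
apply: mem_expg_gcdn; first apply: mem_expg_gcdn.
- by apply: (stab _ x); rewrite ?sxa.
- by apply: (stab _ y); rewrite ?syb.
- by apply: (stab _ z); rewrite ?szc.
Qed.

End ThreeCycleCommutator.

Unset Implicit Arguments.

Theorem mainTheorem3 (n : nat) (s t : {perm 'I_n}) (x y z : 'I_n)
    (a b c e : nat) :
  (3 <= n)%N ->
  is_3cycle (commf s t) z y x ->
  is_ds s x y a -> is_ds s y z b -> is_ds s z x c -> is_ds s x x e ->
  (a + b + c = e)%N ->
  transitive_on <<[set s; t]>> ->
  (primitive_grp <<[set s; t]>> <->
     (full_cycle s /\ gcdn (gcdn a b) c = 1%N)).
Proof.
move=> _ c3 [_ sxa _] [_ syb _] [_ szc _] period abc trans.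
have sG : s \in <<[set s; t]>> by rewrite mem_gen // !inE eqxx.
have tG : t \in <<[set s; t]>> by rewrite mem_gen // !inE eqxx orbT.
have sxab : (s ^+ (a + b)) x = z by rewrite expgD permM sxa syb.
split=> [prim | [full gcd1] D /set0Pn [u uD] bD].
- have orbit_full d : d %| a -> d %| b -> porbit (s ^+ d) x = [set: 'I_n].
    move=> da db; apply: (primitive_power_orbit c3 prim).
      by rewrite -sxa power_orbit_mem.
    by rewrite -sxab power_orbit_mem // dvdn_add.
  split; first by exists x; rewrite -(expg1 s) orbit_full.
  have d_ab := dvdn_gcdl (gcdn a b) c.
  apply: (power_orbit_step period).
    by rewrite -abc !dvdn_add ?dvdn_gcdr // (dvdn_trans d_ab) ?dvdn_gcdl ?dvdn_gcdr.
  by rewrite orbit_full // (dvdn_trans d_ab) ?dvdn_gcdl ?dvdn_gcdr.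
- have [|D1] := eqVneq #|D| 1%N; [by left | right].
  have [g gG gux] := trans u x.
  have xD' : x \in g @: D by rewrite -gux imset_f.
  have cardD' : #|g @: D| = #|D| by rewrite card_imset //; apply: perm_inj.
  have sN : s \in 'N(g @: D | 'P).
    rewrite -[s]expg1 -gcd1.
    by apply: (block_stab_gcd c3 sG tG (block_translate bD gG) xD') => //; rewrite cardD'.
  by apply/eqP; rewrite eqEcard subsetT -cardD' (full_cycle_stab full sN xD') leqnn.
Qed.
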